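(* Let $\nu>-1$ be real. Then $J_\nu(\cdot;q^2)$ has countably infinitely many positive zeros, and each of them is simple.
   Context: Fix $0<q<1$. For $a\in\mathbb C$ put $(a;q)_0=1$, $(a;q)_k=\prod_{i=0}^{k-1}(1-aq^i)$, $(a;q)_\infty=\prod_{i\ge0}(1-aq^i)$. For $\nu\in\mathbb C$ and $x\in\mathbb C\setminus\{0\}$ the Hahn–Exton $q$-Bessel function is $$J_\nu(x;q^2)=\frac{x^\nu}{(q^2;q^2)_\infty}\sum_{k=0}^\infty\frac{(-1)^kq^{k(k+1)}(q^{2\nu+2k+2};q^2)_\infty}{(q^2;q^2)_k}\,x^{2k},$$ with $x^\nu=\exp(\nu\operatorname{Log}x)$ (principal branch). A zero $a$ is simple if $J_\nu'(a;q^2)\ne0$ (ordinary derivative in $x$). *)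

From Stdlib Require Import Reals.
From Coquelicot Require Import Coquelicot.
Open Scope R_scope.

Fixpoint qpoch (a q : R) (k : nat) : R :=
  match k with
  | O => 1
  | S k' => qpoch a q k' * (1 - a * q ^ k')
  end.

Definition qpoch_inf (a q : R) : R := real (Lim_seq (fun k => qpoch a q k)).

(* Hahn--Exton q-Bessel function J_nu(x;q^2), for real nu and real x > 0
   (x^nu = exp(nu ln x) is the principal branch; q^(2nu+2k+2) = Rpower). *)
Definition HE_term (nu q x : R) (k : nat) : R :=
  (-1) ^ k * q ^ (k * (k + 1)) * qpoch_inf (Rpower q (2 * nu + 2 * INR k + 2)) (q ^ 2)
  / qpoch (q ^ 2) (q ^ 2) k * x ^ (2 * k).

Definition HE_J (nu q x : R) : R :=
  Rpower x nu / qpoch_inf (q ^ 2) (q ^ 2) * Series (HE_term nu q x).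

From Stdlib Require Import Reals Lra Lia Psatz Classical ClassicalEpsilon.
From Coquelicot Require Import Coquelicot.
Open Scope R_scope.

(* Write p = q^2 and J_nu(x;q^2) = x^nu G(x^2) / (p;p)_oo with G entire, G(0) <> 0.  The
   three-term recurrence of the coefficients of G becomes the q-difference equation
     G(y) = (1 + s - p y) G(p y) - s G(p^2 y),   s = q^(2 nu),
   and for p y > 1 + s it forbids G(p^2 y), G(p y), G(y) from having one strict sign, so G has
   zeros beyond every bound.  At a zero y > 0 the Casoratian of the solutions n |-> G(y p^n) and
   n |-> G(z p^n) telescopes (since q^(2 nu + 2) < 1) to
     G(z) G(p y) = (y - z) p sum_n q^((2 nu + 2) n) G(y p^(n+1)) G(z p^(n+1)),
   and letting z -> y gives G'(y) G(p y) = - p sum_n q^((2 nu + 2) n) G(y p^(n+1))^2 < 0, so every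
   positive zero of J is simple.  Simple zeros are isolated, and G(0) <> 0 keeps the positive
   zeros away from 0, so they form a closed discrete unbounded subset of (0, +oo), which is
   enumerated in increasing order. *)

(** * q-Pochhammer symbols *)

Lemma pow_le_one (p : R) (k : nat) : 0 <= p <= 1 -> 0 <= p ^ k <= 1.
Proof. intros Hp; induction k as [|k IH]; simpl; nra. Qed.

Section QPochhammer.

Variables a p : R.

Lemma qpoch_shift k : qpoch a p (S k) = (1 - a) * qpoch (a * p) p k.
Proof.
  induction k as [|k IH]; [simpl; ring|].
  change (qpoch a p (S (S k))) with (qpoch a p (S k) * (1 - a * p ^ S k)).
  rewrite IH; simpl; ring.
Qed.

Lemma qpoch_add n k : qpoch a p (n + k) = qpoch a p n * qpoch (a * p ^ n) p k.
Proof.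
  induction k as [|k IH]; [rewrite Nat.add_0_r; simpl; ring|].
  rewrite Nat.add_succ_r; simpl; rewrite IH, pow_add; ring.
Qed.

Hypothesis Hp : 0 <= p <= 1.

Lemma qpoch_pos k : 0 <= a < 1 -> 0 < qpoch a p k.
Proof.
  intros Ha; induction k as [|k IH]; simpl; [lra|].
  pose proof (pow_le_one p k Hp); apply Rmult_lt_0_compat; nra.
Qed.

Hypothesis Ha : 0 <= a <= 1.

Lemma qpoch_unit k : 0 <= qpoch a p k <= 1.
Proof.
  induction k as [|k IH]; simpl; [lra|].
  pose proof (pow_le_one p k Hp).
  assert (0 <= a * p ^ k <= 1) by (split; nra); split; nra.
Qed.

Lemma qpoch_decr k : qpoch a p (S k) <= qpoch a p k.
Proof.
  simpl; pose proof (qpoch_unit k); pose proof (pow_le_one p k Hp).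
  assert (0 <= a * p ^ k) by nra; nra.
Qed.

Lemma qpoch_antitone m n : (m <= n)%nat -> qpoch a p n <= qpoch a p m.
Proof.
  induction 1 as [|n _ IH]; [lra|].
  pose proof (qpoch_decr n); lra.
Qed.

Lemma qpoch_ge_weierstrass k : p < 1 -> 1 - a * (1 - p ^ k) / (1 - p) <= qpoch a p k.
Proof.
  intros Hp1; induction k as [|k IH].
  - simpl; unfold Rdiv; rewrite Rminus_diag, Rmult_0_r, Rmult_0_l; lra.
  - replace (a * (1 - p ^ S k) / (1 - p))
      with (a * (1 - p ^ k) / (1 - p) + a * p ^ k) by (simpl; field; lra).
    simpl; pose proof (pow_le_one p k Hp); pose proof (qpoch_unit k).
    assert (0 <= a * (1 - p ^ k) / (1 - p))
      by (apply Rmult_le_pos; [nra|apply Rlt_le, Rinv_0_lt_compat; lra]).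
    set (w := a * (1 - p ^ k) / (1 - p)) in *.
    assert (0 <= a * p ^ k <= 1) by (split; nra).
    destruct (Rle_dec (1 - w) 0); nra.
Qed.

End QPochhammer.

Lemma qpoch_lower_bound a p : 0 <= a < 1 -> 0 < p < 1 ->
  exists m, 0 < m /\ forall n, m <= qpoch a p n.
Proof.
  intros Ha Hp.
  destruct (pow_lt_1_zero p ltac:(rewrite Rabs_right; lra) ((1 - p) / 2) ltac:(lra))
    as [N HN].
  specialize (HN N (le_n N)); rewrite Rabs_right in HN by (apply Rle_ge, pow_le; lra).
  pose proof (qpoch_pos a p ltac:(lra) N Ha).
  exists (qpoch a p N / 2); split; [lra|intro n].
  destruct (Nat.le_gt_cases n N) as [Hle|Hlt].
  - pose proof (qpoch_antitone a p ltac:(lra) ltac:(lra) n N Hle); lra.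
  - replace n with (N + (n - N))%nat by lia; rewrite qpoch_add.
    pose proof (pow_le_one p N ltac:(lra)); pose proof (pow_le_one p (n - N) ltac:(lra)).
    pose proof (qpoch_ge_weierstrass (a * p ^ N) p ltac:(lra) ltac:(nra) (n - N) ltac:(lra)).
    assert (a * p ^ N * (1 - p ^ (n - N)) / (1 - p) <= 1 / 2).
    { apply (Rmult_le_reg_r (1 - p)); [lra|].
      unfold Rdiv; rewrite Rmult_assoc, Rinv_l by lra.
      assert (0 <= a * p ^ N) by nra; nra. }
    nra.
Qed.

Lemma is_lim_seq_qpoch a p : 0 <= a < 1 -> 0 < p < 1 ->
  is_lim_seq (qpoch a p) (qpoch_inf a p).
Proof.
  intros Ha Hp; destruct (qpoch_lower_bound a p Ha Hp) as [m [_ Hm]].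
  destruct (ex_finite_lim_seq_decr (qpoch a p) m) as [l Hl];
    [intro; apply qpoch_decr; lra|exact Hm|].
  assert (E : Lim_seq (fun k => qpoch a p k) = l) by now apply is_lim_seq_unique.
  unfold qpoch_inf; rewrite E; exact Hl.
Qed.

Lemma qpoch_inf_pos a p : 0 <= a < 1 -> 0 < p < 1 -> 0 < qpoch_inf a p.
Proof.
  intros Ha Hp; destruct (qpoch_lower_bound a p Ha Hp) as [m [Hm0 Hm]].
  assert (Rbar_le m (qpoch_inf a p)).
  { apply (is_lim_seq_le (fun _ => m) (qpoch a p)); auto.
    - apply is_lim_seq_const.
    - apply is_lim_seq_qpoch; auto. }
  simpl in *; lra.
Qed.

Lemma qpoch_inf_shift a p : 0 <= a < 1 -> 0 < p < 1 ->
  qpoch_inf a p = (1 - a) * qpoch_inf (a * p) p.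
Proof.
  intros Ha Hp.
  pose proof (is_lim_seq_qpoch a p Ha Hp) as H1.
  pose proof (is_lim_seq_qpoch (a * p) p ltac:(split; nra) Hp) as H2.
  apply is_lim_seq_incr_1 in H1; apply (is_lim_seq_scal_l _ (1 - a)) in H2.
  apply (is_lim_seq_ext _ _ _ (qpoch_shift a p)) in H1.
  pose proof (is_lim_seq_unique _ _ H1) as E1; rewrite (is_lim_seq_unique _ _ H2) in E1.
  now injection E1.
Qed.

(** * Series and entire power series *)

Lemma sum_n_ge_term (u : nat -> R) n k : (forall i, 0 <= u i) -> (k <= n)%nat ->
  u k <= sum_n u n.
Proof.
  intros Hu; revert k; induction n as [|n IH]; intros k Hk.
  - replace k with 0%nat by lia; rewrite sum_O; lra.
  - rewrite sum_Sn; change (plus (sum_n u n) (u (S n))) with (sum_n u n + u (S n)).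
    pose proof (IH 0%nat (Nat.le_0_l n)); pose proof (Hu 0%nat); pose proof (Hu (S n)).
    destruct (Nat.eq_dec k (S n)) as [->|Hne]; [lra|].
    pose proof (IH k ltac:(lia)); lra.
Qed.

Lemma Series_ge_term (u : nat -> R) k : (forall i, 0 <= u i) -> ex_series u ->
  u k <= Series u.
Proof.
  intros Hu Hex.
  assert (Rbar_le (u k) (Series u)); [|assumption].
  apply (is_lim_seq_le_loc (fun _ => u k) (sum_n u));
    [|apply is_lim_seq_const|apply Series_correct, Hex].
  exists k; intros n Hn; apply sum_n_ge_term; auto.
Qed.

Section EntireSeries.

Variable a : nat -> R.
Hypothesis Ha : CV_radius a = p_infty.

Lemma ex_series_Rabs_entire x : ex_series (fun k => Rabs (a k * x ^ k)).
Proof. apply CV_disk_inside; rewrite Ha; exact I. Qed.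

Lemma is_series_entire x : is_series (fun k => a k * x ^ k) (PSeries a x).
Proof. apply Series_correct, ex_series_Rabs, ex_series_Rabs_entire. Qed.

Lemma is_derive_entire x : is_derive (PSeries a) x (PSeries (PS_derive a) x).
Proof. apply is_derive_PSeries; rewrite Ha; exact I. Qed.

Lemma continuity_entire : continuity (PSeries a).
Proof.
  intro x; apply derivable_continuous_pt; exists (PSeries (PS_derive a) x).
  apply is_derive_Reals, is_derive_entire.
Qed.

Definition PSeries_majorant M := Series (fun k => Rabs (a k * M ^ k)).

Lemma Rabs_PSeries_le x M : Rabs x <= M -> Rabs (PSeries a x) <= PSeries_majorant M.
Proof.
  intros Hx; eapply Rle_trans; [apply Series_Rabs, ex_series_Rabs_entire|].
  apply Series_le; [|apply ex_series_Rabs_entire].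
  intro n; split; [apply Rabs_pos|].
  rewrite !Rabs_mult, <- !RPow_abs; apply Rmult_le_compat_l; [apply Rabs_pos|].
  apply pow_incr; split; [apply Rabs_pos|eapply Rle_trans; [exact Hx|apply Rle_abs]].
Qed.

Lemma PSeries_majorant_ge0 M : 0 <= PSeries_majorant M.
Proof.
  eapply Rle_trans; [|apply (Series_ge_term _ 0)];
    [apply Rabs_pos|intro; apply Rabs_pos|apply ex_series_Rabs_entire].
Qed.

Lemma is_series_qdiff p s y :
  is_series (fun k => a k * y ^ k * (1 - p ^ k) * (1 - s * p ^ k))
    (PSeries a y - (1 + s) * PSeries a (p * y) + s * PSeries a (p * (p * y))).
Proof.
  pose proof (is_series_entire y) as S1.
  pose proof (is_series_scal (- (1 + s)) _ _ (is_series_entire (p * y))) as S2.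
  pose proof (is_series_scal s _ _ (is_series_entire (p * (p * y)))) as S3.
  pose proof (is_series_plus _ _ _ _ (is_series_plus _ _ _ _ S1 S2) S3) as S.
  replace (PSeries a y - (1 + s) * PSeries a (p * y) + s * PSeries a (p * (p * y)))
    with (plus (plus (PSeries a y) (scal (- (1 + s)) (PSeries a (p * y))))
               (scal s (PSeries a (p * (p * y))))) by (unfold plus, scal; simpl; unfold mult; simpl; ring).
  eapply is_series_ext; [|exact S]; intro k.
  unfold plus, scal; simpl; unfold mult; simpl; rewrite !Rpow_mult_distr; ring.
Qed.

End EntireSeries.

Lemma PSeries_lipschitz (a : nat -> R) z w M : CV_radius a = p_infty ->
  Rabs z <= M -> Rabs w <= M ->
  Rabs (PSeries a z - PSeries a w) <= PSeries_majorant (PS_derive a) M * Rabs (z - w).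
Proof.
  intros Ha Hz Hw.
  destruct (MVT_gen (PSeries a) w z (PSeries (PS_derive a))) as [c [Hc ->]].
  - intros x _; apply is_derive_entire, Ha.
  - intros x _; apply continuity_entire, Ha.
  - rewrite Rabs_mult; apply Rmult_le_compat_r; [apply Rabs_pos|].
    apply Rabs_PSeries_le; [rewrite CV_radius_derive; exact Ha|].
    apply Rabs_le_between in Hz; apply Rabs_le_between in Hw; apply Rabs_le.
    unfold Rmin, Rmax in Hc; destruct Rle_dec; lra.
Qed.

Lemma ex_series_geom_dominated (u : nat -> R) K r : 0 <= r < 1 ->
  (forall n, Rabs (u n) <= K * r ^ n) ->
  ex_series (fun n => Rabs (u n)) /\ Series (fun n => Rabs (u n)) <= K / (1 - r).
Proof.
  intros Hr Hu.
  assert (Hg : ex_series (fun n => K * r ^ n)).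
  { apply (ex_series_scal_l K (fun n => r ^ n)), ex_series_geom; rewrite Rabs_right; lra. }
  assert (Hex : ex_series (fun n => Rabs (u n))).
  { apply (@ex_series_le R_AbsRing R_CompleteNormedModule _ (fun n => K * r ^ n)); auto.
    intro n; unfold norm; simpl; unfold abs; simpl; rewrite Rabs_Rabsolu; auto. }
  split; [exact Hex|].
  eapply Rle_trans; [apply (Series_le _ (fun n => K * r ^ n)); auto|].
  - intro n; split; [apply Rabs_pos|auto].
  - rewrite Series_scal_l, Series_geom by (rewrite Rabs_right; lra); unfold Rdiv; lra.
Qed.

Lemma is_lim_seq_geom_dominated (u : nat -> R) K r : 0 <= r < 1 ->
  (forall n, Rabs (u n) <= K * r ^ n) -> is_lim_seq u 0.
Proof.
  intros Hr Hu; apply is_lim_seq_abs_0.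
  apply (is_lim_seq_le_le (fun _ => 0) _ (fun n => K * r ^ n)); [|apply is_lim_seq_const|].
  - intro n; split; [apply Rabs_pos|auto].
  - replace (Finite 0) with (Rbar_mult K 0) by (simpl; f_equal; ring).
    apply is_lim_seq_scal_l, is_lim_seq_geom; rewrite Rabs_right; lra.
Qed.

Lemma continuity_pt_neq0_nbhd (f : R -> R) a : continuity_pt f a -> f a <> 0 ->
  exists e, 0 < e /\ forall x, Rabs (x - a) < e -> f x <> 0.
Proof.
  intros Hc Hfa.
  destruct (Hc (Rabs (f a)) (Rabs_pos_lt _ Hfa)) as [e [He H]]; simpl in H.
  exists e; split; [exact He|]; intros x Hx Hfx.
  destruct (Req_dec a x) as [<-|Hne]; [auto|].
  specialize (H x (conj (conj I Hne) Hx)); unfold R_dist in H.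
  rewrite Hfx, Rminus_0_l, Rabs_Ropp in H; lra.
Qed.

Lemma eq0_of_Rabs_le_eps (x C : R) : 0 <= C ->
  (forall eps, 0 < eps -> Rabs x <= eps * C) -> x = 0.
Proof.
  intros HC Hx; apply Rabs_eq_0, Rle_antisym; [|apply Rabs_pos].
  apply le_epsilon; intros eps Heps.
  specialize (Hx (eps / (C + 1)) ltac:(apply Rdiv_lt_0_compat; lra)).
  enough (eps / (C + 1) * C <= eps) by lra.
  apply (Rmult_le_reg_r (C + 1)); [lra|].
  replace (eps / (C + 1) * C * (C + 1)) with (eps * C) by (field; lra); nra.
Qed.

(* Dividing [f z * c = (y - z) * g z] by [z - y] and letting [z -> y]. *)
Lemma derive_mul_of_factorization (f g : R -> R) y d c K e : 0 < e ->
  is_derive f y d -> f y = 0 ->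
  (forall z, Rabs (z - y) < e -> Rabs (g z - g y) <= K * Rabs (z - y)) ->
  (forall z, Rabs (z - y) < e -> f z * c = (y - z) * g z) ->
  d * c = - g y.
Proof.
  intros He Hd Hf0 Hg Hfac; apply is_derive_Reals in Hd.
  assert (HK : 0 <= K).
  { pose proof (Hg (y + e / 2) ltac:(rewrite Rplus_minus_l, Rabs_right; lra)) as H.
    rewrite Rplus_minus_l, (Rabs_right (e / 2)) in H by lra.
    pose proof (Rabs_pos (g (y + e / 2) - g y)); nra. }
  pose proof (Rabs_pos c).
  apply Rminus_diag_uniq, (eq0_of_Rabs_le_eps _ (Rabs c + K)); [lra|intros eps Heps].
  destruct (Hd eps Heps) as [delta Hdelta]; pose proof (cond_pos delta).
  set (h := Rmin (Rmin delta e) eps / 2).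
  assert (Hh : 0 < h /\ h < delta /\ h < e /\ h <= eps).
  { unfold h; pose proof (Rmin_l (Rmin delta e) eps); pose proof (Rmin_r (Rmin delta e) eps).
    pose proof (Rmin_l delta e); pose proof (Rmin_r delta e).
    assert (0 < Rmin (Rmin delta e) eps) by (repeat apply Rmin_pos; lra); lra. }
  specialize (Hdelta h ltac:(lra) ltac:(rewrite Rabs_right; lra)).
  rewrite Hf0, Rminus_0_r in Hdelta.
  assert (Hyh : Rabs (y + h - y) < e) by (rewrite Rplus_minus_l, Rabs_right; lra).
  pose proof (Hg (y + h) Hyh) as Hgh; rewrite Rplus_minus_l, (Rabs_right h) in Hgh by lra.
  assert (Hq : f (y + h) / h * c = - g (y + h))
    by (rewrite <- (Rmult_div_swap (f _)), (Hfac (y + h) Hyh); field; lra).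
  replace (d * c - - g y) with (- ((f (y + h) / h - d) * c) - (g (y + h) - g y))
    by (rewrite Rmult_minus_distr_r, Hq; ring).
  eapply Rle_trans; [apply Rabs_triang|]; rewrite !Rabs_Ropp, Rabs_mult.
  assert (Rabs (f (y + h) / h - d) * Rabs c <= eps * Rabs c) by nra.
  assert (K * h <= K * eps) by nra; lra.
Qed.

Lemma is_derive_isolated_zero (f : R -> R) a d : is_derive f a d -> d <> 0 -> f a = 0 ->
  exists e, 0 < e /\ forall x, x <> a -> Rabs (x - a) < e -> f x <> 0.
Proof.
  intros Hd Hd0 Hfa; apply is_derive_Reals in Hd.
  destruct (Hd (Rabs d / 2) ltac:(pose proof (Rabs_pos_lt _ Hd0); lra)) as [delta Hdel].
  exists delta; split; [apply cond_pos|]; intros x Hx Hxa Hfx.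
  specialize (Hdel (x - a) ltac:(intro; apply Hx; lra) Hxa).
  rewrite Rplus_minus, Hfx, Hfa, Rminus_0_r in Hdel; unfold Rdiv in Hdel.
  rewrite Rmult_0_l, Rminus_0_l, Rabs_Ropp in Hdel; pose proof (Rabs_pos_lt _ Hd0); lra.
Qed.

(** * The entire function G *)

Definition rho (nu q : R) : R := Rpower q (2 * nu + 2).

Definition HE_coef (nu q : R) (k : nat) : R :=
  (-1) ^ k * q ^ (k * (k + 1)) * qpoch_inf (Rpower q (2 * nu + 2 * INR k + 2)) (q ^ 2)
  / qpoch (q ^ 2) (q ^ 2) k.

Definition HE_G (nu q : R) : R -> R := PSeries (HE_coef nu q).

Section HahnExtonSeries.

Variables nu q : R.
Hypothesis Hq : 0 < q < 1.
Hypothesis Hnu : -1 < nu.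

Lemma qsq_unit : 0 < q ^ 2 < 1.
Proof. simpl; nra. Qed.

Lemma rho_unit : 0 < rho nu q < 1.
Proof.
  unfold rho, Rpower; split; [apply exp_pos|].
  rewrite <- exp_0; apply exp_increasing.
  assert (ln q < 0) by (rewrite <- ln_1; apply ln_increasing; lra); nra.
Qed.

Lemma Rpower_HE_exponent k :
  Rpower q (2 * nu + 2 * INR k + 2) = rho nu q * (q ^ 2) ^ k.
Proof.
  unfold rho; replace (2 * nu + 2 * INR k + 2) with ((2 * nu + 2) + INR (2 * k))
    by (rewrite mult_INR; simpl; ring).
  rewrite Rpower_plus, Rpower_pow, pow_mult by lra; reflexivity.
Qed.

Lemma HE_coef_neq0 k : HE_coef nu q k <> 0.
Proof.
  pose proof qsq_unit; pose proof rho_unit; pose proof (pow_le_one (q ^ 2) k ltac:(lra)).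
  unfold HE_coef; rewrite Rpower_HE_exponent.
  pose proof (qpoch_inf_pos (rho nu q * (q ^ 2) ^ k) (q ^ 2) ltac:(split; nra) qsq_unit).
  pose proof (qpoch_pos (q ^ 2) (q ^ 2) ltac:(lra) k ltac:(lra)).
  pose proof (pow_nonzero (-1) k ltac:(lra)); pose proof (pow_nonzero q (k * (k + 1)) ltac:(lra)).
  apply Rmult_integral_contrapositive_currified; [|apply Rinv_neq_0_compat; lra].
  repeat apply Rmult_integral_contrapositive_currified; lra.
Qed.

Lemma HE_coef_rec k :
  HE_coef nu q (S k) * (1 - (q ^ 2) ^ S k) * (1 - rho nu q * (q ^ 2) ^ k)
  = - (q ^ 2) ^ S k * HE_coef nu q k.
Proof.
  pose proof qsq_unit; pose proof rho_unit; pose proof (pow_le_one (q ^ 2) k ltac:(lra)).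
  pose proof (qpoch_pos (q ^ 2) (q ^ 2) ltac:(lra) k ltac:(lra)).
  pose proof (pow_lt_1_compat (q ^ 2) (S k) ltac:(lra) ltac:(lia)).
  unfold HE_coef; rewrite !Rpower_HE_exponent.
  rewrite (qpoch_inf_shift (rho nu q * (q ^ 2) ^ k)) by (lra || split; nra).
  replace (q ^ (S k * (S k + 1))) with (q ^ (k * (k + 1)) * (q ^ 2) ^ S k)
    by (rewrite <- pow_mult, <- pow_add; f_equal; lia).
  change (qpoch (q ^ 2) (q ^ 2) (S k))
    with (qpoch (q ^ 2) (q ^ 2) k * (1 - q ^ 2 * (q ^ 2) ^ k)).
  replace (rho nu q * (q ^ 2) ^ k * q ^ 2) with (rho nu q * (q ^ 2) ^ S k) by (simpl; ring).
  change ((q ^ 2) ^ S k) with (q ^ 2 * (q ^ 2) ^ k) in *; change ((-1) ^ S k) with (-1 * (-1) ^ k).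
  field; split; lra.
Qed.

Lemma HE_coef_ratio_lim :
  is_lim_seq (fun n => Rabs (HE_coef nu q (S n) / HE_coef nu q n)) 0.
Proof.
  pose proof qsq_unit; pose proof rho_unit.
  set (p := q ^ 2) in *; set (r := rho nu q) in *.
  apply (is_lim_seq_le_le (fun _ => 0) _ (fun n => p / ((1 - p) * (1 - r)) * p ^ n));
    [|apply is_lim_seq_const|].
  - intro n; split; [apply Rabs_pos|].
    pose proof (HE_coef_rec n) as Hrec; pose proof (HE_coef_neq0 n).
    pose proof (pow_le_one p n ltac:(lra)); fold p r in Hrec.
    change (p ^ S n) with (p * p ^ n) in *.
    assert (Hp1 : 1 - p <= 1 - p * p ^ n) by nra.
    assert (Hr1 : 1 - r <= 1 - r * p ^ n) by nra.
    replace (HE_coef nu q (S n))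
      with (- (p * p ^ n) * HE_coef nu q n / ((1 - p * p ^ n) * (1 - r * p ^ n)))
      by (rewrite <- Hrec; field; split; nra).
    replace (- (p * p ^ n) * HE_coef nu q n / ((1 - p * p ^ n) * (1 - r * p ^ n))
             / HE_coef nu q n)
      with (- (p * p ^ n) / ((1 - p * p ^ n) * (1 - r * p ^ n))) by (field; repeat split; nra).
    unfold Rdiv; rewrite Rabs_mult, Rabs_Ropp, Rabs_inv, Rabs_right, (Rabs_right (_ * _))
      by nra.
    replace (p * / ((1 - p) * (1 - r)) * p ^ n) with (p * p ^ n * / ((1 - p) * (1 - r)))
      by ring.
    apply Rmult_le_compat_l; [nra|]; apply Rinv_le_contravar; [nra|].
    apply Rmult_le_compat; lra.
  - replace (Finite 0) with (Rbar_mult (p / ((1 - p) * (1 - r))) 0) by (simpl; f_equal; ring).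
    apply is_lim_seq_scal_l, is_lim_seq_geom; rewrite Rabs_right; lra.
Qed.

Lemma CV_radius_HE_coef : CV_radius (HE_coef nu q) = p_infty.
Proof. apply CV_radius_infinite_DAlembert; [exact HE_coef_neq0|exact HE_coef_ratio_lim]. Qed.

Lemma HE_G_qdiff y :
  HE_G nu q y = (1 + rho nu q / q ^ 2 - q ^ 2 * y) * HE_G nu q (q ^ 2 * y)
                - rho nu q / q ^ 2 * HE_G nu q (q ^ 2 * (q ^ 2 * y)).
Proof.
  pose proof qsq_unit; unfold HE_G.
  set (p := q ^ 2) in *; set (s := rho nu q / p); set (c := HE_coef nu q).
  pose proof (is_series_qdiff c CV_radius_HE_coef p s y) as HF.
  set (F := fun k => c k * y ^ k * (1 - p ^ k) * (1 - s * p ^ k)) in HF.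
  assert (HFS : is_series (fun k => F (S k)) (- (p * y * PSeries c (p * y)))).
  { replace (- (p * y * PSeries c (p * y))) with (scal (- (p * y)) (PSeries c (p * y)))
      by (unfold scal; simpl; unfold mult; simpl; ring).
    eapply is_series_ext;
      [|exact (is_series_scal (- (p * y)) _ _ (is_series_entire c CV_radius_HE_coef (p * y)))].
    intro k; unfold F, scal; simpl; unfold mult; simpl.
    replace (s * (p * p ^ k)) with (rho nu q * p ^ k) by (unfold s; field; lra).
    transitivity (y * y ^ k * (c (S k) * (1 - p ^ S k) * (1 - rho nu q * p ^ k))); [|simpl; ring].
    unfold c; rewrite HE_coef_rec; fold p c; rewrite Rpow_mult_distr; simpl; ring. }
  assert (HF0 : F 0%nat = 0) by (unfold F; simpl; ring).
  assert (HF1 : is_series (fun k => F (S k))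
                  (PSeries c y - (1 + s) * PSeries c (p * y) + s * PSeries c (p * (p * y)))).
  { apply is_series_incr_1; rewrite HF0; unfold plus; simpl; rewrite Rplus_0_r; exact HF. }
  pose proof (is_series_unique _ _ HF1) as E1; rewrite (is_series_unique _ _ HFS) in E1.
  lra.
Qed.

Lemma continuity_HE_G : continuity (HE_G nu q).
Proof. apply continuity_entire, CV_radius_HE_coef. Qed.

(* If G kept a strict sign on p^2 y, p y, y, the q-difference equation would make
   G(p y) G(y) negative. *)
Lemma HE_G_zero_between y : 1 + rho nu q / q ^ 2 < q ^ 2 * y ->
  exists z, q ^ 2 * (q ^ 2 * y) <= z <= y /\ HE_G nu q z = 0.
Proof.
  intros Hy; pose proof qsq_unit; pose proof rho_unit.
  pose proof (HE_G_qdiff y) as Hrec.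
  set (p := q ^ 2) in *; set (s := rho nu q / p) in *.
  assert (0 < s) by (apply Rdiv_lt_0_compat; lra).
  assert (H12 : p * (p * y) <= p * y) by nra.
  assert (H23 : p * y <= y) by nra.
  set (g1 := HE_G nu q (p * (p * y))) in *; set (g2 := HE_G nu q (p * y)) in *;
    set (g3 := HE_G nu q y) in *.
  destruct (Rle_dec (g1 * g2) 0) as [C1|C1].
  { destruct (IVT_cor _ _ _ continuity_HE_G H12 C1) as [z [Hz Hz0]].
    exists z; split; [lra|exact Hz0]. }
  destruct (Rle_dec (g2 * g3) 0) as [C2|C2].
  { destruct (IVT_cor _ _ _ continuity_HE_G H23 C2) as [z [Hz Hz0]].
    exists z; split; [nra|exact Hz0]. }
  exfalso.
  assert (E : g2 * g3 = (1 + s - p * y) * (g2 * g2) - s * (g1 * g2)) by (rewrite Hrec; ring).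
  assert (0 <= g2 * g2) by nra; nra.
Qed.

Lemma HE_G_zero_beyond Y : exists z, Y < z /\ HE_G nu q z = 0.
Proof.
  pose proof qsq_unit; pose proof rho_unit.
  set (p := q ^ 2) in *; set (s := rho nu q / p).
  assert (0 < s) by (apply Rdiv_lt_0_compat; lra).
  pose proof (Rle_abs Y).
  destruct (HE_G_zero_between ((Rabs Y + 1 + s) / (p * p))) as [z [Hz Hz0]].
  - fold p s; replace (p * ((Rabs Y + 1 + s) / (p * p))) with ((Rabs Y + 1 + s) / p)
      by (field; lra).
    apply (Rmult_lt_reg_r p); [lra|].
    replace ((Rabs Y + 1 + s) / p * p) with (Rabs Y + 1 + s) by (field; lra).
    assert ((1 + s) * p < 1 + s) by nra; pose proof (Rabs_pos Y); lra.
  - exists z; split; [|exact Hz0]; fold p s in Hz.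
    replace (p * (p * ((Rabs Y + 1 + s) / (p * p)))) with (Rabs Y + 1 + s) in Hz
      by (field; lra); lra.
Qed.

Definition G_max (M : R) : R := PSeries_majorant (HE_coef nu q) M.
Definition G_lip (M : R) : R := PSeries_majorant (PS_derive (HE_coef nu q)) M.

Lemma G_max_ge0 M : 0 <= G_max M.
Proof. apply PSeries_majorant_ge0, CV_radius_HE_coef. Qed.

Lemma G_lip_ge0 M : 0 <= G_lip M.
Proof. apply PSeries_majorant_ge0; rewrite CV_radius_derive; apply CV_radius_HE_coef. Qed.

Lemma HE_G_bound w M : 0 <= w <= M -> Rabs (HE_G nu q w) <= G_max M.
Proof. intros Hw; apply Rabs_PSeries_le; [apply CV_radius_HE_coef|rewrite Rabs_right; lra]. Qed.

Lemma HE_G_lipschitz w1 w2 M : 0 <= w1 <= M -> 0 <= w2 <= M ->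
  Rabs (HE_G nu q w1 - HE_G nu q w2) <= G_lip M * Rabs (w1 - w2).
Proof.
  intros H1 H2; apply PSeries_lipschitz; [apply CV_radius_HE_coef|..];
    rewrite Rabs_right; lra.
Qed.

(** * The Casoratian and simplicity of the zeros of G *)

Definition casoratian (y z : R) (n : nat) : R :=
  HE_G nu q (y * (q ^ 2) ^ n) * HE_G nu q (z * (q ^ 2) ^ S n)
  - HE_G nu q (z * (q ^ 2) ^ n) * HE_G nu q (y * (q ^ 2) ^ S n).

Definition casoratian_term (y z : R) (n : nat) : R :=
  rho nu q ^ n * HE_G nu q (y * (q ^ 2) ^ S n) * HE_G nu q (z * (q ^ 2) ^ S n).

Lemma HE_G_qdiff_pow w n :
  HE_G nu q (w * (q ^ 2) ^ n)
  = (1 + rho nu q / q ^ 2 - q ^ 2 * (w * (q ^ 2) ^ n)) * HE_G nu q (w * (q ^ 2) ^ S n)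
    - rho nu q / q ^ 2 * HE_G nu q (w * (q ^ 2) ^ S (S n)).
Proof.
  rewrite HE_G_qdiff.
  replace (q ^ 2 * (w * (q ^ 2) ^ n)) with (w * (q ^ 2) ^ S n) by (simpl; ring).
  replace (q ^ 2 * (w * (q ^ 2) ^ S n)) with (w * (q ^ 2) ^ S (S n)) by (simpl; ring).
  reflexivity.
Qed.

Lemma casoratian_step y z n :
  (rho nu q / q ^ 2) ^ n * casoratian y z n - (rho nu q / q ^ 2) ^ S n * casoratian y z (S n)
  = - (y - z) * q ^ 2 * casoratian_term y z n.
Proof.
  pose proof qsq_unit; unfold casoratian, casoratian_term.
  rewrite (HE_G_qdiff_pow y n), (HE_G_qdiff_pow z n).
  replace (rho nu q ^ n) with ((rho nu q / q ^ 2) ^ n * (q ^ 2) ^ n)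
    by (rewrite <- Rpow_mult_distr; f_equal; field; lra).
  simpl pow; ring.
Qed.

Lemma casoratian_telescope y z N :
  casoratian y z 0 - (rho nu q / q ^ 2) ^ S N * casoratian y z (S N)
  = - (y - z) * q ^ 2 * sum_n (casoratian_term y z) N.
Proof.
  induction N as [|N IH].
  - rewrite sum_O, <- casoratian_step, pow_O; ring.
  - rewrite sum_Sn; unfold plus; simpl plus.
    rewrite Rmult_plus_distr_l; pose proof (casoratian_step y z (S N)); lra.
Qed.

Lemma scaled_in_range w M k : 0 <= w <= M -> 0 <= w * (q ^ 2) ^ k <= M.
Proof. intros Hw; pose proof qsq_unit; pose proof (pow_le_one (q ^ 2) k ltac:(lra)); split; nra. Qed.

Lemma casoratian_term_bound y z M n : 0 <= y <= M -> 0 <= z <= M ->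
  Rabs (casoratian_term y z n) <= G_max M * G_max M * rho nu q ^ n.
Proof.
  intros Hy Hz; pose proof rho_unit; unfold casoratian_term.
  pose proof (HE_G_bound _ _ (scaled_in_range y M (S n) Hy)).
  pose proof (HE_G_bound _ _ (scaled_in_range z M (S n) Hz)).
  assert (0 <= rho nu q ^ n) by (apply pow_le; lra).
  rewrite !Rabs_mult, (Rabs_right (rho nu q ^ n)) by lra.
  rewrite (Rmult_comm (G_max M * G_max M)), Rmult_assoc; apply Rmult_le_compat_l; [lra|].
  apply Rmult_le_compat; auto using Rabs_pos.
Qed.

Lemma scaled_casoratian_bound y z M n : 0 <= y <= M -> 0 <= z <= M ->
  Rabs ((rho nu q / q ^ 2) ^ n * casoratian y z n)
  <= G_max M * G_lip M * (y + z) * rho nu q ^ n.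
Proof.
  intros Hy Hz; pose proof qsq_unit; pose proof rho_unit.
  pose proof (G_max_ge0 M); pose proof (G_lip_ge0 M).
  set (p := q ^ 2) in *; set (s := rho nu q / p).
  assert (Hs : rho nu q ^ n = s ^ n * p ^ n)
    by (rewrite <- Rpow_mult_distr; unfold s; f_equal; field; lra).
  assert (Hs0 : 0 <= s ^ n) by (apply pow_le; unfold s; apply Rlt_le, Rdiv_lt_0_compat; lra).
  pose proof (pow_le_one p n ltac:(lra)).
  assert (Hstep : forall w, 0 <= w <= M ->
            Rabs (HE_G nu q (w * p ^ n)) <= G_max M /\
            Rabs (HE_G nu q (w * p ^ S n) - HE_G nu q (w * p ^ n)) <= G_lip M * (w * p ^ n)).
  { intros w Hw; split; [apply HE_G_bound, scaled_in_range; auto|].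
    eapply Rle_trans; [apply HE_G_lipschitz; apply scaled_in_range; exact Hw|].
    apply Rmult_le_compat_l; [lra|]; apply Rabs_le; change (p ^ S n) with (p * p ^ n).
    assert (0 <= w * p ^ n) by nra; nra. }
  destruct (Hstep y Hy) as [Hy0 Hy1]; destruct (Hstep z Hz) as [Hz0 Hz1].
  unfold casoratian; fold p.
  set (u0 := HE_G nu q (y * p ^ n)) in *; set (u1 := HE_G nu q (y * p ^ S n)) in *.
  set (v0 := HE_G nu q (z * p ^ n)) in *; set (v1 := HE_G nu q (z * p ^ S n)) in *.
  replace (u0 * v1 - v0 * u1) with (u0 * (v1 - v0) - v0 * (u1 - u0)) by ring.
  rewrite Rabs_mult, (Rabs_right (s ^ n)), Hs by lra.
  assert (Rabs (u0 * (v1 - v0) - v0 * (u1 - u0)) <= G_max M * G_lip M * (y + z) * p ^ n).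
  { eapply Rle_trans; [apply Rabs_triang|]; rewrite Rabs_Ropp, !Rabs_mult.
    pose proof (Rabs_pos u0); pose proof (Rabs_pos v0).
    pose proof (Rabs_pos (v1 - v0)); pose proof (Rabs_pos (u1 - u0)).
    assert (Rabs u0 * Rabs (v1 - v0) <= G_max M * (G_lip M * (z * p ^ n)))
      by (apply Rmult_le_compat; auto).
    assert (Rabs v0 * Rabs (u1 - u0) <= G_max M * (G_lip M * (y * p ^ n)))
      by (apply Rmult_le_compat; auto).
    nra. }
  replace (G_max M * G_lip M * (y + z) * (s ^ n * p ^ n))
    with (s ^ n * (G_max M * G_lip M * (y + z) * p ^ n)) by ring.
  apply Rmult_le_compat_l; lra.
Qed.

Lemma ex_series_casoratian_term y z : 0 <= y -> 0 <= z -> ex_series (casoratian_term y z).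
Proof.
  intros Hy Hz; pose proof rho_unit; apply ex_series_Rabs.
  refine (proj1 (ex_series_geom_dominated _ _ (rho nu q) _ _)); [lra|].
  intro n; apply (casoratian_term_bound y z (y + z)); lra.
Qed.

(* Telescoping [casoratian_step]; the tail vanishes by [scaled_casoratian_bound]. *)
Lemma casoratian_series_identity y z : 0 <= y -> 0 <= z -> HE_G nu q y = 0 ->
  HE_G nu q z * HE_G nu q (y * q ^ 2) = (y - z) * q ^ 2 * Series (casoratian_term y z).
Proof.
  intros Hy Hz Hy0; pose proof rho_unit.
  assert (Htail : is_lim_seq
            (fun N => (rho nu q / q ^ 2) ^ S N * casoratian y z (S N)) 0).
  { apply (is_lim_seq_incr_1 (fun n => (rho nu q / q ^ 2) ^ n * casoratian y z n)).
    apply (is_lim_seq_geom_dominated _ (G_max (y + z) * G_lip (y + z) * (y + z)) (rho nu q));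
      [lra|intro n; apply scaled_casoratian_bound; lra]. }
  assert (Hsum : is_lim_seq (sum_n (casoratian_term y z)) (Series (casoratian_term y z)))
    by (apply Series_correct, ex_series_casoratian_term; auto).
  apply (is_lim_seq_scal_l _ (- (y - z) * q ^ 2)) in Hsum.
  pose proof (is_lim_seq_plus' _ _ _ _ Htail Hsum) as Hlim.
  apply (is_lim_seq_ext _ (fun _ => casoratian y z 0)) in Hlim;
    [|intro N; pose proof (casoratian_telescope y z N); cbv beta; lra].
  apply is_lim_seq_unique in Hlim; rewrite Lim_seq_const in Hlim; injection Hlim as Hlim.
  unfold casoratian in Hlim; rewrite !pow_O, !pow_1, !Rmult_1_r, Hy0 in Hlim; lra.
Qed.

Lemma casoratian_series_pos y : 0 < y -> HE_G nu q y = 0 ->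
  0 < Series (casoratian_term y y).
Proof.
  intros Hy Hy0; pose proof qsq_unit; pose proof rho_unit.
  assert (HG0 : HE_G nu q 0 <> 0) by (unfold HE_G; rewrite PSeries_0; apply HE_coef_neq0).
  destruct (continuity_pt_neq0_nbhd _ _ (continuity_HE_G 0) HG0) as [e [He Hne]].
  destruct (pow_lt_1_zero (q ^ 2) ltac:(rewrite Rabs_right; lra) (e / y)
              ltac:(apply Rdiv_lt_0_compat; lra)) as [N HN].
  specialize (HN (S N) (Nat.le_succ_diag_r N)).
  rewrite Rabs_right in HN by (apply Rle_ge, pow_le; lra).
  assert (HGN : HE_G nu q (y * (q ^ 2) ^ S N) <> 0).
  { apply Hne; rewrite Rminus_0_r, Rabs_right by (apply Rle_ge, Rmult_le_pos, pow_le; lra).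
    apply (Rmult_lt_compat_l y) in HN; [|lra].
    replace (y * (e / y)) with e in HN by (field; lra); exact HN. }
  assert (Hterm : forall n, 0 <= casoratian_term y y n).
  { intro n; unfold casoratian_term; rewrite Rmult_assoc.
    apply Rmult_le_pos; [apply pow_le; lra|apply Rle_0_sqr]. }
  eapply Rlt_le_trans;
    [|apply (Series_ge_term _ N Hterm), ex_series_casoratian_term; lra].
  unfold casoratian_term; rewrite Rmult_assoc.
  apply Rmult_lt_0_compat; [apply pow_lt; lra|apply Rsqr_pos_lt, HGN].
Qed.

Lemma casoratian_series_lipschitz y z : 0 <= y -> 0 <= z <= 2 * y ->
  Rabs (Series (casoratian_term y z) - Series (casoratian_term y y))
  <= G_max (2 * y) * G_lip (2 * y) / (1 - rho nu q) * Rabs (z - y).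
Proof.
  intros Hy Hz; pose proof rho_unit; pose proof (G_max_ge0 (2 * y)).
  rewrite <- Series_minus by (apply ex_series_casoratian_term; lra).
  set (K := G_max (2 * y) * G_lip (2 * y) * Rabs (z - y)).
  assert (Hd : forall n, Rabs (casoratian_term y z n - casoratian_term y y n)
                         <= K * rho nu q ^ n).
  { intro n; unfold casoratian_term, K.
    set (w := y * (q ^ 2) ^ S n).
    replace (rho nu q ^ n * HE_G nu q w * HE_G nu q (z * (q ^ 2) ^ S n)
             - rho nu q ^ n * HE_G nu q w * HE_G nu q w)
      with (rho nu q ^ n * (HE_G nu q w * (HE_G nu q (z * (q ^ 2) ^ S n) - HE_G nu q w)))
      by ring.
    assert (0 <= rho nu q ^ n) by (apply pow_le; lra).
    rewrite Rabs_mult, (Rabs_right (rho nu q ^ n)), Rabs_mult by lra.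
    assert (Hw : Rabs (HE_G nu q w) <= G_max (2 * y))
      by (apply HE_G_bound, scaled_in_range; lra).
    assert (Hl : Rabs (HE_G nu q (z * (q ^ 2) ^ S n) - HE_G nu q w)
                 <= G_lip (2 * y) * Rabs (z - y)).
    { eapply Rle_trans; [apply (HE_G_lipschitz _ _ (2 * y)); apply scaled_in_range; lra|].
      pose proof qsq_unit; pose proof (pow_le_one (q ^ 2) (S n) ltac:(lra)).
      pose proof (G_lip_ge0 (2 * y)); apply Rmult_le_compat_l; [lra|].
      unfold w; rewrite <- Rmult_minus_distr_r, Rabs_mult, (Rabs_right ((q ^ 2) ^ S n)) by lra.
      pose proof (Rabs_pos (z - y)); nra. }
    replace (G_max (2 * y) * G_lip (2 * y) * Rabs (z - y) * rho nu q ^ n)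
      with (rho nu q ^ n * (G_max (2 * y) * (G_lip (2 * y) * Rabs (z - y)))) by ring.
    apply Rmult_le_compat_l; [lra|]; apply Rmult_le_compat; auto using Rabs_pos. }
  destruct (ex_series_geom_dominated _ _ (rho nu q) ltac:(lra) Hd) as [Hex Hle].
  eapply Rle_trans; [apply Series_Rabs, Hex|].
  eapply Rle_trans; [exact Hle|]; unfold K; right; field; lra.
Qed.

Lemma HE_G_derive_at_zero y : 0 < y -> HE_G nu q y = 0 ->
  PSeries (PS_derive (HE_coef nu q)) y * HE_G nu q (y * q ^ 2)
  = - (q ^ 2 * Series (casoratian_term y y)).
Proof.
  intros Hy Hy0; pose proof qsq_unit.
  apply (derive_mul_of_factorization (HE_G nu q) (fun z => q ^ 2 * Series (casoratian_term y z))
           y _ _ (q ^ 2 * (G_max (2 * y) * G_lip (2 * y) / (1 - rho nu q))) y Hy);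
    [apply is_derive_entire, CV_radius_HE_coef|exact Hy0|..];
    intros z Hz; apply Rabs_def2 in Hz.
  - rewrite <- Rmult_minus_distr_l, Rabs_mult, (Rabs_right (q ^ 2)), Rmult_assoc by lra.
    apply Rmult_le_compat_l; [lra|]; apply casoratian_series_lipschitz; lra.
  - rewrite casoratian_series_identity by lra; ring.
Qed.

Lemma HE_G_derive_neq0 y : 0 < y -> HE_G nu q y = 0 ->
  PSeries (PS_derive (HE_coef nu q)) y <> 0.
Proof.
  intros Hy Hy0 Hd; pose proof qsq_unit.
  pose proof (HE_G_derive_at_zero y Hy Hy0) as E; rewrite Hd, Rmult_0_l in E.
  pose proof (casoratian_series_pos y Hy Hy0); nra.
Qed.

End HahnExtonSeries.

(** * Enumerating a closed discrete unbounded set *)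

Section ClosedDiscreteSets.

Variable Z : R -> Prop.
Hypothesis Z_unbounded : forall X, exists z, Z z /\ X < z.
Hypothesis Z_isolated :
  forall z, Z z -> exists e, 0 < e /\ forall x, Z x -> x <> z -> e <= Rabs (x - z).
Hypothesis Z_closed :
  forall m, (forall e, 0 < e -> exists z, Z z /\ Rabs (z - m) < e) -> Z m.

Lemma Z_least_above c : exists m, Z m /\ c < m /\ forall z, Z z -> c < z -> m <= z.
Proof.
  set (F := fun w => Z (- w) /\ c < - w).
  assert (Hne : exists w, F w).
  { destruct (Z_unbounded c) as [z Hz]; exists (- z); unfold F; rewrite Ropp_involutive; auto. }
  destruct (completeness F ltac:(exists (- c); intros w [_ Hw]; lra) Hne) as [s [Hub Hleast]].
  assert (Hlow : forall z, Z z -> c < z -> - s <= z).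
  { intros z Hz Hcz; enough (- z <= s) by lra.
    apply Hub; unfold F; rewrite Ropp_involutive; auto. }
  assert (Hcs : c <= - s) by (enough (s <= - c) by lra; apply Hleast; intros w [_ Hw]; lra).
  assert (Happ : forall e, 0 < e -> exists z, Z z /\ c < z /\ z < - s + e).
  { intros e He; apply NNPP; intros Hno.
    enough (s <= s - e) by lra.
    apply Hleast; intros w [Hw Hcw]; apply Rnot_lt_le; intros Hlt.
    apply Hno; exists (- w); repeat split; auto; lra. }
  assert (HZs : Z (- s)).
  { apply Z_closed; intros e He; destruct (Happ e He) as [z [Hz [Hcz Hze]]].
    exists z; split; [exact Hz|]; pose proof (Hlow z Hz Hcz); rewrite Rabs_right; lra. }
  exists (- s); repeat split; auto.
  destruct (Rle_lt_or_eq_dec c (- s) Hcs) as [Hlt|Heq]; [exact Hlt|exfalso].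
  destruct (Z_isolated (- s) HZs) as [e [He Hiso]].
  destruct (Happ e He) as [z [Hz [Hcz Hze]]].
  specialize (Hiso z Hz ltac:(lra)); rewrite Rabs_right in Hiso; lra.
Qed.

Lemma Z_increasing_unbounded (u : nat -> R) : (forall n, Z (u n)) ->
  (forall n, u n < u (S n)) -> forall x, exists n, x <= u n.
Proof.
  intros HZu Hinc x; apply NNPP; intros Hno.
  assert (Hlt : forall n, u n < x) by (intro n; apply Rnot_le_lt; intro; apply Hno; eauto).
  assert (Hle : forall n, u n <= u (S n)) by (intro n; apply Rlt_le, Hinc).
  destruct (ex_finite_lim_seq_incr u x Hle (fun n => Rlt_le _ _ (Hlt n))) as [l Hl].
  pose proof (is_lim_seq_incr_compare u l Hl Hle) as Hul.
  apply is_lim_seq_spec in Hl.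
  assert (HZl : Z l).
  { apply Z_closed; intros e He; destruct (Hl (mkposreal e He)) as [N HN].
    exists (u N); split; [apply HZu|apply (HN N), le_n]. }
  destruct (Z_isolated l HZl) as [e [He Hiso]].
  destruct (Hl (mkposreal e He)) as [N HN]; specialize (HN N (le_n N)); simpl in HN.
  pose proof (Hinc N); pose proof (Hul (S N)).
  specialize (Hiso (u N) (HZu N) ltac:(lra)); lra.
Qed.

Definition Z_next (c : R) : R :=
  proj1_sig (constructive_indefinite_description _ (Z_least_above c)).

Lemma Z_next_spec c : Z (Z_next c) /\ c < Z_next c /\ forall z, Z z -> c < z -> Z_next c <= z.
Proof. unfold Z_next; destruct constructive_indefinite_description; auto. Qed.

Fixpoint Z_enum (n : nat) : R :=
  match n with
  | O => Z_next 0
  | S k => Z_next (Z_enum k)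
  end.

Lemma Z_enum_in n : Z (Z_enum n).
Proof. destruct n; apply Z_next_spec. Qed.

Lemma Z_enum_lt n : Z_enum n < Z_enum (S n).
Proof. apply Z_next_spec. Qed.

Lemma Z_enum_injective m n : Z_enum m = Z_enum n -> m = n.
Proof.
  assert (Hmono : forall m k, Z_enum m < Z_enum (S k + m)).
  { intros m' k; induction k as [|k IH]; [apply Z_enum_lt|].
    pose proof (Z_enum_lt (S k + m')); simpl in *; lra. }
  intros E; destruct (Nat.lt_total m n) as [Hlt|[Heq|Hgt]]; auto; exfalso.
  - pose proof (Hmono m (n - S m)%nat); replace (S (n - S m) + m)%nat with n in * by lia; lra.
  - pose proof (Hmono n (m - S n)%nat); replace (S (m - S n) + n)%nat with m in * by lia; lra.
Qed.

Lemma Z_enum_surjective x : Z x -> 0 < x -> exists n, Z_enum n = x.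
Proof.
  intros Hx Hx0.
  destruct (Z_increasing_unbounded Z_enum Z_enum_in Z_enum_lt x) as [n Hn].
  induction n as [|n IH].
  - exists O; destruct (Z_next_spec 0) as [_ [_ Hmin]]; specialize (Hmin x Hx Hx0).
    simpl in *; lra.
  - destruct (Rle_dec x (Z_enum n)) as [Hle|Hle]; [exact (IH Hle)|].
    exists (S n); destruct (Z_next_spec (Z_enum n)) as [_ [_ Hmin]].
    specialize (Hmin x Hx ltac:(lra)); simpl in *; lra.
Qed.

End ClosedDiscreteSets.

Lemma enumerate_closed_discrete (Z : R -> Prop) :
  (forall x, Z x -> 0 < x) ->
  (forall X, exists z, Z z /\ X < z) ->
  (forall z, Z z -> exists e, 0 < e /\ forall x, Z x -> x <> z -> e <= Rabs (x - z)) ->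
  (forall m, (forall e, 0 < e -> exists z, Z z /\ Rabs (z - m) < e) -> Z m) ->
  exists f : nat -> R, (forall m n, f m = f n -> m = n) /\ (forall x, Z x <-> exists n, f n = x).
Proof.
  intros Hpos Hunb Hiso Hcl.
  exists (Z_enum Z Hunb Hiso Hcl); split; [apply Z_enum_injective|].
  intro x; split.
  - intros Hx; exact (Z_enum_surjective Z Hunb Hiso Hcl x Hx (Hpos x Hx)).
  - intros [n <-]; apply Z_enum_in.
Qed.

(** * Zeros of the Hahn-Exton q-Bessel function *)

Section HahnExtonZeros.

Variables nu q : R.
Hypothesis Hq : 0 < q < 1.
Hypothesis Hnu : -1 < nu.

Lemma HE_J_eq x :
  HE_J nu q x = Rpower x nu * HE_G nu q (x ^ 2) / qpoch_inf (q ^ 2) (q ^ 2).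
Proof.
  unfold HE_J, HE_G, PSeries.
  rewrite (Series_ext _ (fun k => HE_coef nu q k * (x ^ 2) ^ k)); [unfold Rdiv; ring|].
  intro k; unfold HE_term, HE_coef; rewrite (pow_mult x 2 k); reflexivity.
Qed.

Lemma HE_J_zero_iff x : 0 < x -> (HE_J nu q x = 0 <-> HE_G nu q (x ^ 2) = 0).
Proof.
  intros Hx; rewrite HE_J_eq.
  pose proof (qpoch_inf_pos (q ^ 2) (q ^ 2) ltac:(pose proof (qsq_unit q Hq); lra)
                (qsq_unit q Hq)).
  assert (0 < Rpower x nu) by apply exp_pos.
  split; intros Hz; [|rewrite Hz; unfold Rdiv; ring].
  unfold Rdiv in Hz; apply Rmult_integral in Hz as [Hz|Hz].
  - apply Rmult_integral in Hz as [Hz|Hz]; [lra|exact Hz].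
  - exfalso; revert Hz; apply Rinv_neq_0_compat; lra.
Qed.

Lemma is_derive_HE_J a : 0 < a ->
  is_derive (HE_J nu q) a
    ((nu * Rpower a (nu - 1) * HE_G nu q (a ^ 2)
      + Rpower a nu * (2 * a * PSeries (PS_derive (HE_coef nu q)) (a ^ 2)))
     / qpoch_inf (q ^ 2) (q ^ 2)).
Proof.
  intros Ha.
  assert (Hsq : is_derive (fun x => x ^ 2) a (2 * a)).
  { apply is_derive_Reals; replace (2 * a) with (INR 2 * a ^ 1) by (simpl; ring).
    apply derivable_pt_lim_pow. }
  pose proof (is_derive_comp _ _ a _ _
                (is_derive_entire _ (CV_radius_HE_coef nu q Hq Hnu) (a ^ 2)) Hsq) as HG.
  assert (Hpow : is_derive (fun x => Rpower x nu) a (nu * Rpower a (nu - 1)))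
    by (apply is_derive_Reals, derivable_pt_lim_power, Ha).
  pose proof (is_derive_mult _ _ a _ _ Hpow HG Rmult_comm) as Hprod.
  pose proof (is_derive_scal_l _ a _ (/ qpoch_inf (q ^ 2) (q ^ 2)) Hprod) as Hall.
  apply (is_derive_ext
           (fun x => Rpower x nu * HE_G nu q (x ^ 2) * / qpoch_inf (q ^ 2) (q ^ 2)));
    [intro x; rewrite HE_J_eq; reflexivity|].
  unfold Rdiv; exact Hall.
Qed.

Lemma HE_J_simple_zero a : 0 < a -> HE_J nu q a = 0 ->
  exists d, is_derive (HE_J nu q) a d /\ d <> 0.
Proof.
  intros Ha Hz; apply HE_J_zero_iff in Hz; [|exact Ha].
  eexists; split; [apply is_derive_HE_J, Ha|].
  rewrite Hz, Rmult_0_r, Rplus_0_l.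
  pose proof (qpoch_inf_pos (q ^ 2) (q ^ 2) ltac:(pose proof (qsq_unit q Hq); lra)
                (qsq_unit q Hq)).
  assert (0 < Rpower a nu) by apply exp_pos.
  pose proof (HE_G_derive_neq0 nu q Hq Hnu (a ^ 2) ltac:(nra) Hz).
  apply Rmult_integral_contrapositive_currified; [|apply Rinv_neq_0_compat; lra].
  repeat apply Rmult_integral_contrapositive_currified; lra.
Qed.

Lemma HE_J_zeros_unbounded X : exists z, (0 < z /\ HE_J nu q z = 0) /\ X < z.
Proof.
  destruct (HE_G_zero_beyond nu q Hq Hnu (Rmax X 1 ^ 2)) as [y [Hy Hy0]].
  pose proof (Rmax_l X 1); pose proof (Rmax_r X 1).
  assert (Hsq : sqrt y ^ 2 = y) by (simpl; rewrite Rmult_1_r; apply sqrt_sqrt; nra).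
  assert (Rmax X 1 < sqrt y) by (pose proof (sqrt_pos y); nra).
  exists (sqrt y); split; [split; [lra|]|lra].
  apply HE_J_zero_iff; [lra|]; rewrite Hsq; exact Hy0.
Qed.

Lemma HE_J_zeros_bounded_away : exists e, 0 < e /\ forall x, 0 < x -> HE_J nu q x = 0 -> e <= x.
Proof.
  assert (Hc : continuity_pt (fun x => HE_G nu q (x ^ 2)) 0).
  { apply (continuity_pt_comp (fun x => x ^ 2)); [apply derivable_continuous_pt, derivable_pt_pow|].
    apply continuity_HE_G; auto. }
  assert (H0 : HE_G nu q (0 ^ 2) <> 0).
  { simpl; rewrite Rmult_0_l; unfold HE_G; rewrite PSeries_0; apply HE_coef_neq0; auto. }
  destruct (continuity_pt_neq0_nbhd _ _ Hc H0) as [e [He Hne]].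
  exists e; split; [exact He|]; intros x Hx Hx0; apply Rnot_lt_le; intros Hlt.
  apply (Hne x); [rewrite Rminus_0_r, Rabs_right; lra|apply HE_J_zero_iff; auto].
Qed.

Lemma HE_J_positive_zeros_closed m :
  (forall e, 0 < e -> exists z, (0 < z /\ HE_J nu q z = 0) /\ Rabs (z - m) < e) ->
  0 < m /\ HE_J nu q m = 0.
Proof.
  intros Hm; destruct HE_J_zeros_bounded_away as [e [He Hlow]].
  assert (Hme : e <= m).
  { apply Rnot_lt_le; intros Hlt; destruct (Hm (e - m) ltac:(lra)) as [z [[Hz Hz0] Hzm]].
    pose proof (Hlow z Hz Hz0); apply Rabs_def2 in Hzm; lra. }
  split; [lra|]; apply NNPP; intros Hne.
  assert (Hc : continuity_pt (HE_J nu q) m).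
  { apply derivable_continuous_pt; eexists; apply is_derive_Reals, is_derive_HE_J; lra. }
  destruct (continuity_pt_neq0_nbhd _ _ Hc Hne) as [e' [He' Hne']].
  destruct (Hm e' He') as [z [[_ Hz0] Hzm]]; exact (Hne' z Hzm Hz0).
Qed.

Lemma HE_J_positive_zeros_isolated z : 0 < z /\ HE_J nu q z = 0 ->
  exists e, 0 < e /\ forall x, 0 < x /\ HE_J nu q x = 0 -> x <> z -> e <= Rabs (x - z).
Proof.
  intros [Hz Hz0]; destruct (HE_J_simple_zero z Hz Hz0) as [d [Hd Hd0]].
  destruct (is_derive_isolated_zero _ _ _ Hd Hd0 Hz0) as [e [He Hiso]].
  exists e; split; [exact He|]; intros x [_ Hx0] Hxz.
  apply Rnot_lt_le; intros Hlt; exact (Hiso x Hxz Hlt Hx0).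
Qed.

End HahnExtonZeros.

Theorem theorem3p4 (q nu : R) (hq0 : 0 < q) (hq1 : q < 1) (hnu : -1 < nu) :
  (exists f : nat -> R,
      (forall m n : nat, f m = f n -> m = n) /\
      (forall x : R, (0 < x /\ HE_J nu q x = 0) <-> exists n : nat, f n = x)) /\
  (forall a : R, 0 < a -> HE_J nu q a = 0 ->
      exists d : R, is_derive (HE_J nu q) a d /\ d <> 0).
Proof.
  assert (Hq : 0 < q < 1) by lra.
  split; [|exact (HE_J_simple_zero nu q Hq hnu)].
  apply enumerate_closed_discrete.
  - intros x [Hx _]; exact Hx.
  - exact (HE_J_zeros_unbounded nu q Hq hnu).
  - exact (HE_J_positive_zeros_isolated nu q Hq hnu).
  - exact (HE_J_positive_zeros_closed nu q Hq hnu).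
Qed.
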